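(* Consider a time-invariant UMCO channel $\mathbf P(b_i|b_{i-1},a_i)$ on finite alphabets $\mathbb A,\mathbb B$. Let $\widetilde V_0\equiv0$ and, for $t\ge1$, $$\widetilde V_t(b_{-1})=\sup_{\pi(\cdot|b_{-1})}\sum_{a_0}\Big\{\sum_{b_0}\log\frac{\mathbf P(b_0|b_{-1},a_0)}{\mathbf P^{\pi}(b_0|b_{-1})}\mathbf P(b_0|b_{-1},a_0)+\sum_{b_0}\widetilde V_{t-1}(b_0)\mathbf P(b_0|b_{-1},a_0)\Big\}\pi(a_0|b_{-1}).$$ Assume there exist $V:\mathbb B\to\mathbb R$ and $J^*\in\mathbb R$ with $\lim_{t\to\infty}(\widetilde V_t(b_{-1})-tJ^* )=V(b_{-1})$ for all $b_{-1}\in\mathbb B$, and that there exist $\{\pi^{\infty,*}(\cdot|b_{-1})\}$ and the pair $(V,J^* )$ solving $$J^*+V(b_{-1})=\sup_{\pi(\cdot|b_{-1})}\sum_{a_0}\Big\{\sum_{b_0}\log\frac{\mathbf P(b_0|b_{-1},a_0)}{\mathbf P^{\pi}(b_0|b_{-1})}\mathbf P(b_0|b_{-1},a_0)+\sum_{b_0}V(b_0)\mathbf P(b_0|b_{-1},a_0)\Big\}\pi(a_0|b_{-1}).$$ Then for every initial distribution $\mu$ of $B_{-1}$, $$J^*=C^{FB,UMCO}_{A^\infty\to B^\infty}=\liminf_{n\to\infty}\frac1n\sup_{\pi^\infty}\mathbf E^{\pi^\infty}_\mu\Big[\sum_{i=0}^{n-1}\log\frac{\mathbf P(B_i|B_{i-1},A_i)}{\mathbf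 P^{\pi^\infty}(B_i|B_{i-1})}\Big],$$ and in particular this value does not depend on $\mu$.
   Context: Time-invariant UMCO channel: channel $\mathbf P(b_i|b_{i-1},a_i)$ on finite alphabets $\mathbb A,\mathbb B$, with the initial state $B_{-1}\sim\mu$. Input distributions $\pi^\infty(a_i|b_{i-1})$ (time-invariant), output transitions $\mathbf P^{\pi}(b_i|b_{i-1})=\sum_a\mathbf P(b_i|b_{i-1},a)\pi(a|b_{i-1})$. Logarithms base 2. *)

From Stdlib Require Import Reals ClassicalEpsilon.
From mathcomp Require Import all_boot.

Set Implicit Arguments.
Unset Strict Implicit.
Unset Printing Implicit Defensive.

Local Open Scope R_scope.

Notation "\rsum_ ( i : T ) F" := (\big[Rplus/R0]_(i : T) F)
  (at level 41, F at level 41, i, T at level 50) : R_scope.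
Notation "\rsum_ ( i < n ) F" := (\big[Rplus/R0]_(i < n) F)
  (at level 41, F at level 41, i, n at level 50) : R_scope.
Notation "\rprod_ ( i < n ) F" := (\big[Rmult/R1]_(i < n) F)
  (at level 36, F at level 36, i, n at level 50) : R_scope.

(* logarithm base 2 (Stdlib's ln is total, ln x = 0 for x <= 0) *)
Definition log2 (x : R) : R := ln x / ln 2.

Definition Rsup (E : R -> Prop) : R :=
  epsilon (inhabits R0) (fun l => is_lub E l).
Definition Rinf (E : R -> Prop) : R := - Rsup (fun x => E (- x)).
Definition Rliminf (u : nat -> R) : R :=
  Rsup (fun y => exists n : nat, y = Rinf (fun x => exists k : nat, (n <= k)%nat /\ x = u k)).

Definition is_distr (T : finType) (p : T -> R) : Prop :=
  (forall x, 0 <= p x) /\ \rsum_(x : T) p x = 1.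

(* channel P b b' a = P(b_i = b | b_{i-1} = b', a_i = a) *)
Definition is_channel (A B : finType) (P : B -> B -> A -> R) : Prop :=
  forall b' a, is_distr (fun b => P b b' a).

(* time-invariant input distribution pi b' a = pi(a_i = a | b_{i-1} = b') *)
Definition is_policy (A B : finType) (pi : B -> A -> R) : Prop :=
  forall b', is_distr (pi b').

(* P^pi(b | b') for a distribution p = pi(.|b') on A *)
Definition Pout (A B : finType) (P : B -> B -> A -> R) (p : A -> R) (b b' : B) : R :=
  \rsum_(a : A) P b b' a * p a.

(* the one-step operator inside the sup of the dynamic programming equations:
   sum_{a0} { sum_{b0} log(P(b0|b',a0)/P^p(b0|b')) P(b0|b',a0)
              + sum_{b0} W(b0) P(b0|b',a0) } p(a0) *)
Definition Fop (A B : finType) (P : B -> B -> A -> R) (W : B -> R)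
    (b' : B) (p : A -> R) : R :=
  \rsum_(a0 : A)
    ((\rsum_(b0 : B) log2 (P b0 b' a0 / Pout P p b0 b') * P b0 b' a0)
     + (\rsum_(b0 : B) W b0 * P b0 b' a0)) * p a0.

Definition supF (A B : finType) (P : B -> B -> A -> R) (W : B -> R) (b' : B) : R :=
  Rsup (fun x => exists p : A -> R, is_distr p /\ x = Fop P W b' p).

Fixpoint Vtilde (A B : finType) (P : B -> B -> A -> R) (t : nat) : B -> R :=
  match t with
  | O => fun _ => 0
  | S t' => fun b' => supF P (Vtilde P t') b'
  end.

(* trajectories: t : n.-tuple (A * B) lists (a_0,b_0),...,(a_{n-1},b_{n-1});
   bprev b0 t i = b_{i-1} (with b_{-1} = b0). *)
Definition bprev (A B : finType) (n : nat) (bm1 : B) (t : n.-tuple (A * B)) (i : nat) : B :=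
  match i with
  | O => bm1
  | S k => nth bm1 (map snd t) k
  end.

(* E^{pi}_mu [ sum_{i=0}^{n-1} log P(B_i|B_{i-1},A_i) / P^pi(B_i|B_{i-1}) ],
   as an explicit sum over all trajectories weighted by their joint probability *)
Definition Epayoff (A B : finType) (P : B -> B -> A -> R) (mu : B -> R)
    (pi : B -> A -> R) (n : nat) : R :=
  \rsum_(bm1 : B) \rsum_(t : n.-tuple (A * B))
    (mu bm1
     * (\rprod_(i < n) (pi (bprev bm1 t i) (tnth t i).1
                        * P (tnth t i).2 (bprev bm1 t i) (tnth t i).1))
     * (\rsum_(i < n) log2 (P (tnth t i).2 (bprev bm1 t i) (tnth t i).1
                             / Pout P (pi (bprev bm1 t i)) (tnth t i).2 (bprev bm1 t i)))).

Definition C_FB_UMCO (A B : finType) (P : B -> B -> A -> R) (mu : B -> R) : R :=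
  Rliminf (fun n => / INR n *
    Rsup (fun x => exists pi : B -> A -> R, is_policy pi /\ x = Epayoff P mu pi n)).

From Stdlib Require Import Reals Lra ClassicalEpsilon.
From HB Require Import structures.
From mathcomp Require Import all_boot.
Local Open Scope R_scope.

(* Let W_n^pi(b) ([exp_info pi n b]) be the expected information collected
   in n steps from the state b under the policy pi.  It satisfies the recursion
   W_{n+1}^pi(b) = F(W_n^pi)(b, pi(.|b)), where F is the one-step operator of
   the dynamic programming equation; F is monotone and commutes with adding
   constants.  Since V solves J + V = sup_p F(V)(., p), induction gives
   W_n^pi <= nJ + V + c for every policy pi, and since pi* attains the sup,
   W_n^{pi*} >= nJ + V - c, where c bounds |V|.  Averaging over mu, the
   n-step optimum lies within 2c of nJ, so (1/n) times it tends to J for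
   every mu. *)

Lemma RplusA : associative Rplus. Proof. by move=> *; ring. Qed.
Lemma RmultA : associative Rmult. Proof. by move=> *; ring. Qed.
HB.instance Definition _ := Monoid.isComLaw.Build R R0 Rplus RplusA Rplus_comm Rplus_0_l.
HB.instance Definition _ := Monoid.isComLaw.Build R R1 Rmult RmultA Rmult_comm Rmult_1_l.
HB.instance Definition _ := Monoid.isMulLaw.Build R R0 Rmult Rmult_0_l Rmult_0_r.
HB.instance Definition _ :=
  Monoid.isAddLaw.Build R Rmult Rplus Rmult_plus_distr_r Rmult_plus_distr_l.

Lemma rsum_le (I : finType) (F G : I -> R) :
  (forall i, F i <= G i) -> \rsum_(i : I) F i <= \rsum_(i : I) G i.
Proof. by move=> FG; apply: (big_ind2 (fun x y => x <= y)) => // *; lra. Qed.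

Lemma rsum_ge_term (I : finType) (F : I -> R) j :
  (forall i, 0 <= F i) -> F j <= \rsum_(i : I) F i.
Proof.
move=> F0; rewrite (bigD1 j) //=.
have : 0 <= \big[Rplus/R0]_(i | i != j) F i.
  by apply: (big_ind (fun x => 0 <= x)) => // *; lra.
lra.
Qed.

Lemma rsum_distr_le (T : finType) (mu F : T -> R) k :
  is_distr mu -> (forall x, F x <= k) -> \rsum_(x : T) mu x * F x <= k.
Proof.
case=> mu0 mu1 Fk; rewrite -[k in _ <= k]Rmult_1_l -mu1 big_distrl /=.
by apply: rsum_le => x; apply: Rmult_le_compat_l.
Qed.

Lemma rsum_distr_ge (T : finType) (mu F : T -> R) k :
  is_distr mu -> (forall x, k <= F x) -> k <= \rsum_(x : T) mu x * F x.
Proof.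
case=> mu0 mu1 kF; rewrite -[k in k <= _]Rmult_1_l -mu1 big_distrl /=.
by apply: rsum_le => x; apply: Rmult_le_compat_l.
Qed.

Lemma is_lub_Rsup (E : R -> Prop) : (exists x, E x) -> bound E -> is_lub E (Rsup E).
Proof.
move=> ne bd; apply: epsilon_spec.
by case: (completeness E bd ne) => m Hm; exists m.
Qed.

Lemma Rsup_eq (E : R -> Prop) l : (exists x, E x) -> is_lub E l -> Rsup E = l.
Proof.
move=> ne El; apply: (is_lub_u E) => //; apply: is_lub_Rsup => //.
by exists l; case: El.
Qed.

Lemma Rsup_between (E : R -> Prop) x0 lo hi :
  E x0 -> lo <= x0 -> (forall x, E x -> x <= hi) -> lo <= Rsup E <= hi.
Proof.
move=> Ex0 lo_x0 Ehi.
have [ub least] : is_lub E (Rsup E) by apply: is_lub_Rsup; [exists x0 | exists hi].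
by split; [apply: Rle_trans (ub _ Ex0) | apply: least].
Qed.

Lemma Rinf_glb (E : R -> Prop) m : (exists x, E x) -> (forall x, E x -> m <= x) ->
  (forall x, E x -> Rinf E <= x) /\ (forall l, (forall x, E x -> l <= x) -> l <= Rinf E).
Proof.
move=> [x0 Ex0] mE; rewrite /Rinf.
have [ub least] : is_lub (fun x => E (- x)) (Rsup (fun x => E (- x))).
  apply: is_lub_Rsup; first by exists (- x0); rewrite Ropp_involutive.
  by exists (- m) => x /mE; lra.
split=> [x Ex | l lE].
  by have := ub (- x); rewrite Ropp_involutive => /(_ Ex); lra.
have : Rsup (fun x => E (- x)) <= - l by apply: least => x /lE; lra.
lra.
Qed.

Lemma le_of_le_add_div {x y K : R} : 0 <= K ->
  (forall N, exists k, (N <= k)%N /\ x <= y + K / INR k) -> x <= y.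
Proof.
move=> K0 near_y; apply: Rnot_lt_le => yx.
have e0 : 0 < (x - y) / (K + 1) by apply: Rdiv_lt_0_compat; lra.
have [N [N_small N0]] := archimed_cor1 _ e0.
have [k [Nk xk]] := near_y N.
have Npos : 0 < INR N by apply: lt_0_INR.
have : / INR k <= / INR N by apply: Rinv_le_contravar => //; apply: le_INR; apply/leP.
have : K * ((x - y) / (K + 1)) < x - y.
  have -> : K * ((x - y) / (K + 1)) = (x - y) * (K / (K + 1)) by field; lra.
  suff : K / (K + 1) < 1 by move=> ?; nra.
  by apply: (Rmult_lt_reg_r (K + 1)); [lra | field_simplify; lra].
rewrite /Rdiv in xk *; nra.
Qed.

Lemma Rliminf_squeeze {u : nat -> R} {J K : R} : 0 <= K ->
  (forall n, (0 < n)%N -> J - K / INR n <= u n <= J + K / INR n) ->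
  Rliminf u = J.
Proof.
move=> K0 u_near.
have div_anti n k : (0 < n)%N -> (n <= k)%N -> K / INR k <= K / INR n.
  move=> n0 nk; apply: Rmult_le_compat_l => //.
  by apply: Rinv_le_contravar; [apply: lt_0_INR; apply/ltP | apply: le_INR; apply/leP].
have u_lb k : Rmin (u 0%N) (J - K) <= u k.
  case: k => [|k]; first exact: Rmin_l.
  have := u_near k.+1 isT; have := div_anti 1%N k.+1 isT isT.
  rewrite /= Rdiv_1_r; have := Rmin_r (u 0%N) (J - K); lra.
pose tail n := fun x => exists k, (n <= k)%N /\ x = u k.
have tail_u n k : (n <= k)%N -> tail n (u k) by exists k.
have tail_lb n x : tail n x -> Rmin (u 0%N) (J - K) <= x by case=> k [_ ->].
have tail_glb n := @Rinf_glb (tail n) _ (ex_intro _ _ (tail_u n n (leqnn n))) (tail_lb n).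
have inf_ge n : (0 < n)%N -> J - K / INR n <= Rinf (tail n).
  move=> n0; apply: (proj2 (tail_glb n)) => _ [k [nk ->]].
  have := u_near k (leq_trans n0 nk); have := div_anti n k n0 nk; lra.
have inf_le n : Rinf (tail n) <= J.
  apply: (le_of_le_add_div K0) => N; exists (maxn N.+1 n); split.
    exact: leq_trans (leqnSn N) (leq_maxl _ _).
  have := proj1 (tail_glb n) _ (tail_u n _ (leq_maxr N.+1 n)).
  by have := u_near (maxn N.+1 n) (leq_trans (ltn0Sn N) (leq_maxl _ _)); lra.
apply: Rsup_eq; first by exists (Rinf (tail 0%N)), 0%N.
split=> [_ [n ->] | b b_ub]; first exact: inf_le.
apply: (le_of_le_add_div K0) => N; exists N.+1; split; first exact: leqnSn.
have := b_ub (Rinf (tail N.+1)) (ex_intro _ N.+1 erefl); have := inf_ge N.+1 isT; lra.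
Qed.

Lemma Rliminf_avg (S : nat -> R) J K :
  (forall n, INR n * J - K <= S n <= INR n * J + K) ->
  Rliminf (fun n => / INR n * S n) = J.
Proof.
move=> S_near; have K0 : 0 <= K by have := S_near 0%N; rewrite /=; lra.
apply: (Rliminf_squeeze K0) => n n0.
have np : 0 < INR n by apply: lt_0_INR; apply/ltP.
have := S_near n; have ip : 0 < / INR n by apply: Rinv_0_lt_compat.
have -> : J - K / INR n = / INR n * (INR n * J - K) by field; lra.
have -> : J + K / INR n = / INR n * (INR n * J + K) by field; lra.
by case=> lo hi; split; apply: Rmult_le_compat_l => //; lra.
Qed.

Lemma ln_le_id x : 0 <= x -> ln x <= x.
Proof.
case=> [x0 | <-]; last by rewrite /ln; case: Rlt_dec => [/Rlt_irrefl [] | _]; lra.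
by have := exp_ineq1_le (ln x); rewrite exp_ln //; lra.
Qed.

Lemma ln2_gt0 : 0 < ln 2.
Proof. by have := ln_lt_2; lra. Qed.

(* From [ln x <= x]; the case [q = 0] relies on the junk value [ln 0 = 0]. *)
Lemma log2_div_mul_le q o w : 0 <= q -> 0 <= w <= o -> log2 (q / o) * w <= q / ln 2.
Proof.
move=> q0 [w0 wo]; have l2 := ln2_gt0.
have il2 : 0 < / ln 2 by apply: Rinv_0_lt_compat.
case: w0 => [wpos | <-]; last by rewrite Rmult_0_r; apply: Rmult_le_pos; lra.
have opos : 0 < o by lra.
have qo0 : 0 <= q / o by apply: Rmult_le_pos => //; apply: Rlt_le; apply: Rinv_0_lt_compat.
have : ln (q / o) * w <= q / o * w by apply: Rmult_le_compat_r; [lra | apply: ln_le_id].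
have : q / o * w <= q.
  rewrite -[q in _ <= q](Rmult_1_r) /Rdiv Rmult_assoc; apply: Rmult_le_compat_l => //.
  by apply: (Rmult_le_reg_l o) => //; field_simplify; lra.
by rewrite /log2 /Rdiv => *; nra.
Qed.

Section OneStep.
Variables (A B : finType) (P : B -> B -> A -> R).
Hypothesis HP : is_channel P.

Let P_ge0 b0 b a : 0 <= P b0 b a. Proof. by case: (HP b a). Qed.
Let P_sum1 b a : \rsum_(b0 : B) P b0 b a = 1. Proof. by case: (HP b a). Qed.

Lemma Fop_shift W k b p : is_distr p -> Fop P (fun x => W x + k) b p = Fop P W b p + k.
Proof.
case=> _ p1; rewrite /Fop -[k in _ + k]Rmult_1_r -p1 big_distrr -big_split /=.
apply: eq_bigr => a _; rewrite -[in RHS]Rmult_plus_distr_r; congr (_ * _).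
rewrite Rplus_assoc; congr (_ + _).
rewrite -[k in _ + k]Rmult_1_r -(P_sum1 b a) big_distrr -big_split /=.
by apply: eq_bigr => *; ring.
Qed.

Lemma Fop_mono W1 W2 b p : is_distr p -> (forall x, W1 x <= W2 x) ->
  Fop P W1 b p <= Fop P W2 b p.
Proof.
case=> p0 _ W12; apply: rsum_le => a; apply: Rmult_le_compat_r => //.
by apply: Rplus_le_compat_l; apply: rsum_le => b0; apply: Rmult_le_compat_r.
Qed.

Lemma Fop_le_log_bound W M b p : is_distr p -> (forall x, W x <= M) ->
  Fop P W b p <= \rsum_(a : A) / ln 2 + M.
Proof.
move=> p_distr WM; have [p0 p1] := p_distr.
apply: Rle_trans (_ : Fop P (fun _ => 0 + M) b p <= _).
  by apply: Fop_mono => // x; have := WM x; lra.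
rewrite Fop_shift //; apply: Rplus_le_compat_r; apply: rsum_le => a.
rewrite [X in _ + X]big1 ?Rplus_0_r => [|*]; last by ring.
rewrite big_distrl -(Rmult_1_l (/ ln 2)) -(P_sum1 b a) big_distrl /=.
apply: rsum_le => b0; rewrite Rmult_assoc.
apply: log2_div_mul_le => //; split; first exact: Rmult_le_pos.
apply: (@rsum_ge_term _ (fun a => P b0 b a * p a)) => a'; exact: Rmult_le_pos.
Qed.

Lemma Fop_le_supF W b p : is_distr p -> Fop P W b p <= supF P W b.
Proof.
move=> p_distr; pose M := \rsum_(x : B) Rabs (W x).
have [ub _] : is_lub (fun x => exists q, is_distr q /\ x = Fop P W b q) (supF P W b).
  apply: is_lub_Rsup; first by exists (Fop P W b p), p.
  exists (\rsum_(a : A) / ln 2 + M) => _ [q [q_distr ->]].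
  apply: Fop_le_log_bound => // x; apply: Rle_trans (Rle_abs _) _.
  apply: (@rsum_ge_term _ (fun x => Rabs (W x))) => y; apply: Rabs_pos.
by apply: ub; exists p.
Qed.

End OneStep.

Lemma rsum_tuple0 (T : finType) (F : 0.-tuple T -> R) :
  \rsum_(t : 0.-tuple T) F t = F [tuple].
Proof. by apply: big_pred1 => t /=; symmetry; apply/eqP; apply: tuple0. Qed.

Lemma rsum_pair (I J : finType) (F : I * J -> R) :
  \rsum_(x : I * J) F x = \rsum_(i : I) \rsum_(j : J) F (i, j).
Proof. by rewrite pair_bigA; apply: eq_bigr => -[]. Qed.

Lemma rsum_tupleS (T : finType) n (F : n.+1.-tuple T -> R) :
  \rsum_(t : n.+1.-tuple T) F t = \rsum_(x : T) \rsum_(t : n.-tuple T) F [tuple of x :: t].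
Proof.
rewrite pair_bigA (reindex (fun p : T * n.-tuple T => [tuple of p.1 :: p.2])) //.
exists (fun t => (thead t, [tuple of behead t])).
  by move=> [x t] _ /=; congr pair; apply: val_inj.
by move=> t _; rewrite /= -tuple_eta.
Qed.

Section Trajectories.
Context {A B : finType} (P : B -> B -> A -> R).

Lemma bprev_cons n bm1 (x : A * B) (t : n.-tuple (A * B)) (i : 'I_n) :
  bprev bm1 [tuple of x :: t] (lift ord0 i) = bprev x.2 t i.
Proof.
case: i => [[|k] Hk] //=.
by apply: set_nth_default; rewrite size_map size_tuple; apply: ltnW.
Qed.

Definition traj_prob (pi : B -> A -> R) {n} b (t : n.-tuple (A * B)) : R :=
  \rprod_(i < n) (pi (bprev b t i) (tnth t i).1 * P (tnth t i).2 (bprev b t i) (tnth t i).1).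

Definition traj_info (pi : B -> A -> R) {n} b (t : n.-tuple (A * B)) : R :=
  \rsum_(i < n) log2 (P (tnth t i).2 (bprev b t i) (tnth t i).1
                      / Pout P (pi (bprev b t i)) (tnth t i).2 (bprev b t i)).

Definition exp_info (pi : B -> A -> R) n b : R :=
  \rsum_(t : n.-tuple (A * B)) (traj_prob pi b t * traj_info pi b t).

Lemma traj_prob_cons pi n b x (t : n.-tuple (A * B)) :
  traj_prob pi b [tuple of x :: t] = pi b x.1 * P x.2 b x.1 * traj_prob pi x.2 t.
Proof.
rewrite /traj_prob big_ord_recl; congr Rmult.
by apply: eq_bigr => i _; rewrite bprev_cons tnthS.
Qed.

Lemma traj_info_cons pi n b x (t : n.-tuple (A * B)) :
  traj_info pi b [tuple of x :: t] =
  log2 (P x.2 b x.1 / Pout P (pi b) x.2 b) + traj_info pi x.2 t.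
Proof.
rewrite /traj_info big_ord_recl; congr Rplus.
by apply: eq_bigr => i _; rewrite bprev_cons tnthS.
Qed.

Lemma Epayoff_exp_info mu pi n :
  Epayoff P mu pi n = \rsum_(b : B) mu b * exp_info pi n b.
Proof.
apply: eq_bigr => b _; rewrite /exp_info big_distrr.
by apply: eq_bigr => t _; rewrite Rmult_assoc.
Qed.

Hypothesis HP : is_channel P.
Variable pi : B -> A -> R.
Hypothesis Hpi : is_policy pi.

Lemma traj_prob_sum1 n b : \rsum_(t : n.-tuple (A * B)) traj_prob pi b t = 1.
Proof.
elim: n b => [|n IH] b; first by rewrite rsum_tuple0 /traj_prob big_ord0.
rewrite rsum_tupleS rsum_pair -(proj2 (Hpi b)); apply: eq_bigr => a _.
rewrite -[pi b a]Rmult_1_r -(proj2 (HP b a)) !big_distrr /=; apply: eq_bigr => b0 _.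
under eq_bigr do rewrite traj_prob_cons.
by rewrite -big_distrr IH; apply: Rmult_1_r.
Qed.

Lemma exp_info0 b : exp_info pi 0 b = 0.
Proof. by rewrite /exp_info rsum_tuple0 /traj_info big_ord0 Rmult_0_r. Qed.

Lemma exp_infoS n b : exp_info pi n.+1 b = Fop P (exp_info pi n) b (pi b).
Proof.
rewrite /exp_info rsum_tupleS rsum_pair /Fop; apply: eq_bigr => a _.
rewrite -big_split big_distrl; apply: eq_bigr => b0 _.
set L := log2 _; set c := pi b a * P b0 b a.
transitivity (c * (L * (\rsum_(t : n.-tuple (A * B)) traj_prob pi b0 t)
                   + exp_info pi n b0)).
  rewrite /exp_info [L * _]big_distrr -big_split big_distrr /=; apply: eq_bigr => t _.
  by rewrite traj_prob_cons traj_info_cons /c /L /=; ring.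
by rewrite traj_prob_sum1 /c /= -/(exp_info pi n b0); ring.
Qed.

End Trajectories.

Section Comparison.
Context {A B : finType} {P : B -> B -> A -> R}.
Hypothesis HP : is_channel P.
Context {V : B -> R} {J c : R}.
Hypothesis V_bounded : forall b, - c <= V b <= c.

Lemma exp_info_le_bellman { pi : B -> A -> R } : is_policy pi ->
  (forall b p, is_distr p -> Fop P V b p <= J + V b) ->
  forall n b, exp_info P pi n b <= INR n * J + V b + c.
Proof.
move=> Hpi V_super; elim=> [|n IH] b.
  by rewrite exp_info0 /=; have := V_bounded b; lra.
rewrite exp_infoS // S_INR.
apply: Rle_trans (_ : Fop P (fun x => V x + (INR n * J + c)) b (pi b) <= _).
  by apply: Fop_mono => // x; have := IH x; lra.
by rewrite Fop_shift //; have := V_super b (pi b) (Hpi b); lra.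
Qed.

Lemma exp_info_ge_bellman { pi : B -> A -> R } : is_policy pi ->
  (forall b, J + V b <= Fop P V b (pi b)) ->
  forall n b, INR n * J + V b - c <= exp_info P pi n b.
Proof.
move=> Hpi V_attained; elim=> [|n IH] b.
  by rewrite exp_info0 /=; have := V_bounded b; lra.
rewrite exp_infoS // S_INR.
apply: Rle_trans (_ : _ <= Fop P (fun x => V x + (INR n * J - c)) b (pi b)) _.
  by rewrite Fop_shift //; have := V_attained b; lra.
by apply: Fop_mono => // x; have := IH x; lra.
Qed.

End Comparison.

Theorem mainTheorem6 (A B : finType) (P : B -> B -> A -> R)
  (HP : is_channel P) (V : B -> R) (J : R)
  (Hlim : forall b : B, Un_cv (fun t => Vtilde P t b - INR t * J) (V b))
  (Hbell : exists pistar : B -> A -> R, is_policy pistar /\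
      forall b : B, J + V b = supF P V b /\ J + V b = Fop P V b (pistar b)) :
  forall mu : B -> R, is_distr mu -> J = C_FB_UMCO P mu.
Proof.
move=> mu mu_distr; case: Hbell => pistar [Hpistar bellman].
pose c := \rsum_(b : B) Rabs (V b).
have V_bounded b : - c <= V b <= c.
  have : Rabs (V b) <= c by apply: (@rsum_ge_term _ (fun b => Rabs (V b))) => ?; apply: Rabs_pos.
  by have := Rle_abs (V b); have := Rle_abs (- V b); rewrite Rabs_Ropp; lra.
have V_super b p : is_distr p -> Fop P V b p <= J + V b.
  by rewrite (proj1 (bellman b)); apply: Fop_le_supF.
symmetry; apply: (@Rliminf_avg _ J (2 * c)) => n.
apply: (@Rsup_between _ (Epayoff P mu pistar n)); first by exists pistar.
  rewrite Epayoff_exp_info; apply: rsum_distr_ge => // b.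
  have := exp_info_ge_bellman HP V_bounded Hpistar
            (fun b => Req_le _ _ (proj2 (bellman b))) n b.
  by have := V_bounded b; lra.
move=> _ [pi [Hpi ->]]; rewrite Epayoff_exp_info; apply: rsum_distr_le => // b.
have := exp_info_le_bellman HP V_bounded Hpi V_super n b.
by have := V_bounded b; lra.
Qed.
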